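(* Let $(G,\sigma)$ be a finite connected signed graph satisfying $CD^{\sigma}(K,N)$ for some $K\in\mathbb{R}$, $N\in(0,\infty]$, and let $f:V\to\mathbb{R}$ be an eigenfunction of $\Delta^{\sigma}$ to a nonzero eigenvalue $\lambda^{\sigma}$. Then for all $x\in V$ and all $\varepsilon>0$, \[ |\nabla^{\sigma}f|^{2}(x)\leq\left(\left((2+\varepsilon)^{2}-\frac{4}{N}\right)\frac{\lambda^{\sigma}}{\varepsilon}-\left(\frac{4}{\varepsilon}+2\right)K\right)\cdot \max_{z\in V}f^{2}(z), \] with the convention $\frac1N=0$ if $N=\infty$.
   Context: $G=(V,E)$ is a finite simple connected graph with degrees $d_x$; $\sigma:E\to\{\pm1\}$, $\sigma_{xy}=\sigma(\{x,y\})$. Signed Laplacian $\Delta^{\sigma}f(x)=\frac{1}{d_x}\sum_{y\sim x}(\sigma_{xy}f(y)-f(x))$; $\Delta$ is the case $\sigma\equiv+1$. Eigenfunction to $\lambda^\sigma$: nonzero $f$ with $-\Delta^\sigma f=\lambda^\sigma f$. $\Gamma^{\sigma}(f,g)=\frac12\{\Delta(fg)-g\Delta^{\sigma}f-f\Delta^{\sigma}g\}$, $\Gamma_2^{\sigma}(f,g)=\frac12\{\Delta\Gamma^{\sigma}(f,g)-\Gamma^{\sigma}(g,\Delta^{\sigma}f)-\Gamma^{\sigma}(f,\Delta^{\sigma}g)\}$; $|\nabla^{\sigma}f|^2(x)=\frac{1}{d_x}\sum_{y\sim x}(\sigma_{xy}f(y)-f(x))^2$. $CD^{\sigma}(K,N)$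 means $\Gamma_2^{\sigma}(f,f)(x)\ge\frac1N(\Delta^\sigma f)^2(x)+K\Gamma^\sigma(f,f)(x)$ for all $f$ and all $x\in V$. *)

From mathcomp Require Import all_boot all_order all_algebra.
Set Implicit Arguments. Unset Strict Implicit. Unset Printing Implicit Defensive.
Import Order.TTheory GRing.Theory Num.Theory.
Local Open Scope ring_scope.

Section SignedGraph.
Variables (R : realFieldType) (T : finType) (adj : rel T).

Definition simple_graph : Prop :=
  (forall x, ~~ adj x x) /\ (forall x y, adj x y = adj y x).
Definition connected_graph : Prop := forall x y : T, connect adj x y.

(* A signature sigma : E -> {+1,-1}, given as a symmetric function on pairs
   whose values on edges are +1 or -1 (values on non-edges are irrelevant). *)
Definition signature (sig : T -> T -> R) : Prop :=
  (forall x y, adj x y -> sig x y = sig y x) /\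
  (forall x y, adj x y -> sig x y = 1 \/ sig x y = -1).

Definition deg (x : T) : R := (#|[set y | adj x y]|)%:R.

Definition lapS (sig : T -> T -> R) (f : T -> R) (x : T) : R :=
  (deg x)^-1 * \sum_(y | adj x y) (sig x y * f y - f x).

Definition lap (f : T -> R) := lapS (fun _ _ => 1) f.

Definition GammaS (sig : T -> T -> R) (f g : T -> R) (x : T) : R :=
  2^-1 * (lap (fun z => f z * g z) x - g x * lapS sig f x - f x * lapS sig g x).

Definition Gamma2S (sig : T -> T -> R) (f g : T -> R) (x : T) : R :=
  2^-1 * (lap (GammaS sig f g) x - GammaS sig g (lapS sig f) x
           - GammaS sig f (lapS sig g) x).

Definition gradS2 (sig : T -> T -> R) (f : T -> R) (x : T) : R :=
  (deg x)^-1 * \sum_(y | adj x y) (sig x y * f y - f x) ^+ 2.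

(* N in (0, +oo]: [None] stands for N = +oo; 1/N := 0 in that case. *)
Definition invN (N : option R) : R := if N is Some n then n^-1 else 0.
Definition validN (N : option R) : Prop := if N is Some n then 0 < n else True.

Definition CDS (sig : T -> T -> R) (K : R) (N : option R) : Prop :=
  forall (f : T -> R) (x : T),
    invN N * (lapS sig f x) ^+ 2 + K * GammaS sig f f x <= Gamma2S sig f f x.

Definition eigenfunS (sig : T -> T -> R) (f : T -> R) (lam : R) : Prop :=
  (exists x, f x != 0) /\ (forall x, - lapS sig f x = lam * f x).

Definition maxsq (f : T -> R) : R := \big[Num.max/0]_(z : T) (f z ^+ 2).

End SignedGraph.

From mathcomp Require Import all_boot all_order all_algebra ring lra.
Import Order.TTheory GRing.Theory Num.Theory.
Local Open Scope ring_scope.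

(** For an eigenfunction, [Gamma2 f f = Delta Gamma / 2 + lam Gamma] and
    [Delta (f^2) = 2 Gamma - 2 lam f^2], so [CD(K,N)] becomes a differential
    inequality for [Gamma := Gamma f f] alone.  At a maximum point [x0] of
    [Gamma + c f^2] both Laplacians are nonpositive; with
    [c = eps lam / 2 + lam - K] the two inequalities combine into
    [(eps lam / 2) Gamma x0 <= (c lam - lam^2 / N) f(x0)^2], which bounds
    [Gamma <= Gamma + c f^2] everywhere.  That [c] is nonnegative follows from
    [K <= lam], obtained from [CD(K,N)] at a maximum point of [Gamma]. *)

Set Implicit Arguments. Unset Strict Implicit.

Lemma exists_argmax (T : finType) (R : realDomainType) (F : T -> R) (x : T) :
  exists x0, forall y, F y <= F x0.
Proof. by case: (@arg_maxP _ _ T x predT F erefl) => x0 _ Fx0; exists x0 => y; apply: Fx0. Qed.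

Lemma invN_ge0 (R : realFieldType) (N : option R) : validN N -> 0 <= invN N.
Proof. by case: N => [n /ltW|] //=; rewrite invr_ge0. Qed.

Lemma le_maxsq (R : realFieldType) (T : finType) (f : T -> R) z : f z ^+ 2 <= maxsq f.
Proof. exact: le_bigmax. Qed.

Section Laplacian.
Variables (R : realFieldType) (T : finType) (adj : rel T).

Lemma eq_lapS (s : T -> T -> R) (g h : T -> R) :
  g =1 h -> lapS adj s g =1 lapS adj s h.
Proof. by move=> gh x; rewrite /lapS; under eq_bigr => y _ do rewrite !gh. Qed.

Lemma lapSZ (s : T -> T -> R) (g : T -> R) a x :
  lapS adj s (fun z => a * g z) x = a * lapS adj s g x.
Proof. by rewrite /lapS [RHS]mulrCA [in RHS]mulr_sumr; congr (_ * _); apply: eq_bigr => y _; ring. Qed.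

Lemma lapD (g h : T -> R) x :
  lap adj (fun z => g z + h z) x = lap adj g x + lap adj h x.
Proof. by rewrite /lap /lapS -mulrDr -big_split; congr (_ * _); apply: eq_bigr => y _ /=; ring. Qed.

Lemma lap_le0_argmax (g : T -> R) x0 : (forall y, g y <= g x0) -> lap adj g x0 <= 0.
Proof.
move=> g_max; apply: mulr_ge0_le0; first by rewrite invr_ge0 ler0n.
by apply: sumr_le0 => y _; rewrite mul1r subr_le0.
Qed.

Lemma gradS2_ge0 (s : T -> T -> R) f x : 0 <= gradS2 adj s f x.
Proof.
apply: mulr_ge0; first by rewrite invr_ge0 ler0n.
by apply: sumr_ge0 => y _; apply: sqr_ge0.
Qed.

Lemma gradS2_eq0_lapS (s : T -> T -> R) f x :
  gradS2 adj s f x = 0 -> lapS adj s f x = 0.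
Proof.
move/eqP; rewrite mulf_eq0 => /orP[/eqP deg0 | /eqP sum0].
  by rewrite /lapS deg0 mul0r.
rewrite /lapS big1 ?mulr0 // => y adj_xy.
by apply/eqP; rewrite -sqrf_eq0; apply/eqP; apply: (psumr_eq0P _ sum0) => // i _; apply: sqr_ge0.
Qed.

Lemma GammaS_diag (s : T -> T -> R) f x : signature adj s ->
  GammaS adj s f f x = gradS2 adj s f x / 2.
Proof.
case=> _ s_pm1; rewrite /GammaS /gradS2 /lap /lapS.
have -> : \sum_(y | adj x y) (s x y * f y - f x) ^+ 2 =
    \sum_(y | adj x y) (1 * (f y * f y) - f x * f x)
    - 2 * f x * \sum_(y | adj x y) (s x y * f y - f x).
  rewrite mulr_sumr -sumrB; apply: eq_bigr => y adj_xy.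
  by case: (s_pm1 x y adj_xy) => ->; ring.
ring.
Qed.

Lemma GammaS_diag_ge0 (s : T -> T -> R) f x : signature adj s -> 0 <= GammaS adj s f f x.
Proof. by move=> sigma_s; rewrite GammaS_diag // divr_ge0 ?gradS2_ge0 ?ler0n. Qed.

Lemma GammaSZr (s : T -> T -> R) (f g h : T -> R) a x :
  (forall z, g z = a * h z) -> GammaS adj s f g x = a * GammaS adj s f h x.
Proof.
move=> gh; rewrite /GammaS /lap.
rewrite (@eq_lapS _ _ (fun z => a * (f z * h z))); last by move=> z; rewrite gh mulrCA.
rewrite (@eq_lapS _ g (fun z => a * h z)) // !lapSZ gh; ring.
Qed.

End Laplacian.

Section Eigenfunction.
Variables (R : realFieldType) (T : finType) (adj : rel T).
Variables (sig : T -> T -> R) (K : R) (N : option R) (f : T -> R) (lam : R).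
Hypothesis sigma_sig : signature adj sig.
Hypothesis eigen_f : forall x, - lapS adj sig f x = lam * f x.
Hypothesis f_neq0 : exists x, f x != 0.
Hypothesis lam_neq0 : lam != 0.

Local Notation Gam := (GammaS adj sig f f).

Lemma lapS_eigen x : lapS adj sig f x = - lam * f x.
Proof. by rewrite -[LHS]opprK eigen_f mulNr. Qed.

Lemma lap_sqr_eigen x :
  lap adj (fun z => f z * f z) x = 2 * Gam x - 2 * lam * f x ^+ 2.
Proof. by rewrite /GammaS lapS_eigen; field. Qed.

Lemma Gamma2S_eigen x : Gamma2S adj sig f f x = 2^-1 * lap adj Gam x + lam * Gam x.
Proof.
by rewrite /Gamma2S (@GammaSZr _ _ adj sig f _ f (- lam)) //; [field | exact: lapS_eigen].
Qed.

Lemma CDS_eigen x : CDS adj sig K N ->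
  invN N * lam ^+ 2 * f x ^+ 2 + K * Gam x <= 2^-1 * lap adj Gam x + lam * Gam x.
Proof. by move=> /(_ f x); rewrite lapS_eigen Gamma2S_eigen mulNr sqrrN exprMn mulrA. Qed.

(* At a maximum point of [f^2] we get [Gamma <= lam f^2], with [f^2 > 0]. *)
Lemma eigenvalue_gt0 : 0 < lam.
Proof.
have [x1 fx1_neq0] := f_neq0.
have [xm f2_max] := exists_argmax (fun z => f z ^+ 2) x1.
have fxm_gt0 : 0 < f xm ^+ 2.
  by apply: lt_le_trans (f2_max x1); rewrite lt_def sqrf_eq0 fx1_neq0 sqr_ge0.
have : lap adj (fun z => f z * f z) xm <= 0.
  by apply: lap_le0_argmax => y; rewrite -!expr2.
rewrite lap_sqr_eigen => lap_le0.
have Gxm := GammaS_diag_ge0 f xm sigma_sig.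
by rewrite lt_def lam_neq0 /=; nra.
Qed.

(* A vanishing gradient would force [lam f = - lapS f = 0]. *)
Lemma exists_Gamma_gt0 : exists x, 0 < Gam x.
Proof.
have [x1 fx1_neq0] := f_neq0.
case: (boolP [exists z, 0 < Gam z]) => [/existsP // | /existsPn Gam_le0].
have Gx1_eq0 : Gam x1 = 0.
  by apply/eqP; rewrite eq_le (GammaS_diag_ge0 f x1 sigma_sig) andbT leNgt Gam_le0.
have : gradS2 adj sig f x1 = 0.
  by move: Gx1_eq0; rewrite GammaS_diag // => /eqP; rewrite mulf_eq0 invr_eq0 pnatr_eq0 orbF => /eqP.
move/gradS2_eq0_lapS/eqP; rewrite lapS_eigen mulf_eq0 oppr_eq0.
by rewrite (negbTE lam_neq0) (negbTE fx1_neq0).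
Qed.

Hypothesis invN_ge0 : 0 <= invN N.
Hypothesis cd : CDS adj sig K N.

(* [CD(K,N)] at a maximum point of [Gamma > 0]. *)
Lemma K_le_eigenvalue : K <= lam.
Proof.
have [x1 Gx1_gt0] := exists_Gamma_gt0.
have [xg Gam_max] := exists_argmax Gam x1.
have Gxg_gt0 : 0 < Gam xg := lt_le_trans Gx1_gt0 (Gam_max x1).
have lapG_le0 : lap adj Gam xg <= 0 := lap_le0_argmax adj Gam_max.
have cd_xg := CDS_eigen xg cd.
have : 0 <= invN N * lam ^+ 2 * f xg ^+ 2.
  by apply: mulr_ge0; [apply: mulr_ge0 |]; rewrite ?sqr_ge0.
nra.
Qed.

Lemma Gamma_bound_argmax c x0 :
  (forall y, Gam y + c * f y ^+ 2 <= Gam x0 + c * f x0 ^+ 2) ->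
  (c + K - lam) * Gam x0 <= (c * lam - invN N * lam ^+ 2) * f x0 ^+ 2.
Proof.
have lapH : lap adj (fun y => Gam y + c * f y ^+ 2) x0
    = lap adj Gam x0 + c * lap adj (fun z => f z * f z) x0.
  by rewrite lapD /lap -lapSZ; congr (_ + _); apply: eq_lapS => z; rewrite expr2.
move=> /(lap_le0_argmax adj); rewrite lapH lap_sqr_eigen => lapH_le0.
have cd_x0 := CDS_eigen x0 cd.
nra.
Qed.

End Eigenfunction.

Theorem corollary3p2 (R : realFieldType) (T : finType) (adj : rel T)
  (sig : T -> T -> R) (K : R) (N : option R) (f : T -> R) (lam : R) :
  simple_graph adj -> connected_graph adj -> signature adj sig ->
  validN N -> CDS adj sig K N ->
  eigenfunS adj sig f lam -> lam != 0 ->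
  forall (x : T) (eps : R), 0 < eps ->
    gradS2 adj sig f x <=
      (((2 + eps) ^+ 2 - 4 * invN N) * lam / eps - (4 / eps + 2) * K)
        * maxsq f.
Proof.
move=> _ _ sigma_sig /invN_ge0 invN_ge0 cd [f_neq0 eigen_f] lam_neq0 x eps eps_gt0.
have lam_gt0 := eigenvalue_gt0 sigma_sig eigen_f f_neq0 lam_neq0.
have K_le_lam := K_le_eigenvalue sigma_sig eigen_f f_neq0 lam_neq0 invN_ge0 cd.
set G := GammaS adj sig f f; set c := eps * lam / 2 + lam - K.
set B := 2 * (c - invN N * lam) / eps.
have epslam_gt0 : 0 < eps * lam / 2 by rewrite divr_gt0 ?mulr_gt0.
have c_gt0 : 0 < c by rewrite /c; lra.
have [x0 H_max] := exists_argmax (fun z => G z + c * f z ^+ 2) x.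
have Gx0_le : G x0 <= B * f x0 ^+ 2.
  rewrite -(ler_pM2l epslam_gt0) {1}(_ : eps * lam / 2 = c + K - lam); last by rewrite /c; ring.
  apply: le_trans (Gamma_bound_argmax eigen_f cd H_max) _.
  by rewrite le_eqVlt; apply/orP; left; apply/eqP; rewrite /B /c; field; rewrite gt_eqF.
have B_c_gt0 : 0 < B + c.
  have [x1 fx1_neq0] := f_neq0.
  have fx1_gt0 : 0 < f x1 ^+ 2 by rewrite lt_def sqrf_eq0 fx1_neq0 sqr_ge0.
  have := H_max x1; have := GammaS_diag_ge0 f x1 sigma_sig; rewrite -/G.
  have := sqr_ge0 (f x0); nra.
have Gx_le : G x <= (B + c) * maxsq f.
  have := H_max x; have := le_maxsq f x0; have := sqr_ge0 (f x).
  nra.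
have -> : ((2 + eps) ^+ 2 - 4 * invN N) * lam / eps - (4 / eps + 2) * K = 2 * (B + c).
  by rewrite /B /c; field; rewrite gt_eqF.
have -> : gradS2 adj sig f x = 2 * G x by rewrite /G GammaS_diag // mulrC divfK ?pnatr_eq0.
by rewrite -mulrA; lra.
Qed.
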